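(* Let $\mathcal R_5=\{(wx,x):w\in\{0,1\}^*,\ x\in\{0,1\}\}\subseteq\{0,1\}^*\times\{0,1\}^*$. Then $\mathcal R_5$ cannot be computed by a quantum finite state transducer with an isolated cutpoint, while it is computed by a deterministic finite state transducer.
   Context: A probabilistic finite state transducer (pfst) is a tuple $T=(Q,\Sigma_1,\Sigma_2,V,f,q_0,Q_{\rm acc},Q_{\rm rej})$ with finite state set $Q$, finite input/output alphabets $\Sigma_1,\Sigma_2$, initial state $q_0$, disjoint accepting/rejecting sets $Q_{\rm acc},Q_{\rm rej}\subseteq Q$ (the other states are non-halting). For each $a\in\Sigma_1\cup\{\ddagger,\$\}$ ($\ddagger,\$$ are end markers) there is a stochastic $Q\times Q$ matrix $V_a$ and an output function $f_a:Q\to\Sigma_2^*$; $V_\$$ puts all probability on halting states. On input $v$ the machine reads $\ddagger v\$$; in state $q$ reading $a$ it appends $f_a(q)$ to the output tape and moves to state $p$ with probability $(V_a)_{qp}$; if $p$ is accepting (rejecting) it halts and accepts with the current output (rejects). $T(w|v)$ is the probability of accepting with output $w$ on input $v$. A deterministic finite state transducer (dfst) is a pfst all of whose matrix entries are $0$ or $1$; it computes $\mathcal R$ if $T(w|v)=1$ for $(v,w)\in\mathcal R$ and $T(w|v)=0$ otherwise. A quantum finite state transducer (qfst) has the same data except that each $V_a$ is a unitary on $\ell^2(Q)$ (and $V_\$$ maps the span of non-halting states into the span of halting states). Its non-halting part is a vector $\psi=\sum_{q,w}\alpha_{qw}|q\rangle\otimes|w\rangle\in\ell^2(Q\times\Sigma_2^*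 )$, initially $|q_0\rangle\otimes|\epsilon\rangle$; reading $a$ maps it to $\psi'=\sum_{q,w}\alpha_{qw}V_a|q\rangle\otimes|wf_a(q)\rangle$ with $V_a|q\rangle=\sum_p(V_a)_{qp}|p\rangle$, after which the squared norm of the component of $\psi'$ on $\mathrm{span}(Q_{\rm acc})\otimes|x\rangle$ is added to the probability of accepting with output $x$, the squared norm of the component on $\mathrm{span}(Q_{\rm rej})\otimes\ell^2(\Sigma_2^* )$ to the rejection probability, and the computation continues with the projection onto non-halting states. $T(w|v)$ is defined analogously. $T$ computes $\mathcal R$ with isolated cutpoint if there are $0<\alpha<1$ and $\varepsilon>0$ such that for all $v,w$: $(v,w)\in\mathcal R\Rightarrow T(w|v)\ge\alpha+\varepsilon$ and $(v,w)\notin\mathcal R\Rightarrow T(w|v)\le\alpha-\varepsilon$. *)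

From HB Require Import structures.
From mathcomp Require Import all_boot all_order all_algebra.
From mathcomp Require Import complex.
From mathcomp Require Import reals.
Set Implicit Arguments. Unset Strict Implicit. Unset Printing Implicit Defensive.
Import Order.TTheory GRing.Theory Num.Theory.
Local Open Scope ring_scope.

(* Tape symbols: input letters of Sigma_1 = {0,1} (= bool), plus the end
   markers "double dagger" (left) and "$" (right). *)
Inductive tsym : Type := TLetter of bool | TLeft | TRight.

Definition tape (v : seq bool) : seq tsym := TLeft :: rcons (map TLetter v) TRight.

(* Reading a symbol with matrix V and output function f, the configuration
   sum_{q,w} psi(q,w) |q> (x) |w> is mapped to
   sum_{q,w} psi(q,w) V|q> (x) |w f(q)>, V|q> = sum_p V_{qp} |p>. *)
Definition evolve (K : pzRingType) (n : nat) (V : 'M[K]_n) (f : 'I_n -> seq bool)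
  (psi : 'I_n -> seq bool -> K) : 'I_n -> seq bool -> K :=
  fun p y => \sum_(q < n)
     (if (size (f q) <= size y)%N && (drop (size y - size (f q)) y == f q)
      then psi q (take (size y - size (f q)) y) * V q p else 0).

Definition project (K : pzRingType) (n : nat) (halt : {set 'I_n})
  (psi : 'I_n -> seq bool -> K) : 'I_n -> seq bool -> K :=
  fun p y => if p \in halt then 0 else psi p y.

(* Acceptance weight with output x of a configuration vector, given a
   "weight" function turning a coefficient into a probability contribution
   (squared modulus in the quantum case, identity in the probabilistic one). *)
Definition acc_weight (K : pzRingType) (R : pzRingType) (wt : K -> R) (n : nat)
  (acc : {set 'I_n}) (psi : 'I_n -> seq bool -> K) (x : seq bool) : R :=
  \sum_(q < n | q \in acc) wt (psi q x).

Fixpoint run_acc (K : pzRingType) (R : pzRingType) (wt : K -> R) (n : nat)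
  (V : tsym -> 'M[K]_n) (f : tsym -> 'I_n -> seq bool)
  (acc halt : {set 'I_n}) (x : seq bool)
  (psi : 'I_n -> seq bool -> K) (s : seq tsym) : R :=
  match s with
  | [::] => 0
  | a :: s' =>
      let psi' := evolve (V a) (f a) psi in
      acc_weight wt acc psi' x + run_acc wt V f acc halt x (project halt psi') s'
  end.

Definition init (K : pzRingType) (n : nat) (q0 : 'I_n) : 'I_n -> seq bool -> K :=
  fun q w => if (q == q0) && (w == [::]) then 1 else 0.
Arguments init {K n} q0.

Section QFST.
Variable R : realType.
Local Notation C := R[i].

Definition conjT n (A : 'M[C]_n) : 'M[C]_n := (map_mx (@conjc R) A)^T.
Definition unitary n (A : 'M[C]_n) : Prop := A *m conjT A = 1%:M.

Definition sqmod (z : C) : R := (@complex.Re R z) ^+ 2 + (@complex.Im R z) ^+ 2.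

Record qfst : Type := QFST {
  q_n : nat;
  q_V : tsym -> 'M[C]_q_n;
  q_f : tsym -> 'I_q_n -> seq bool;
  q_q0 : 'I_q_n;
  q_acc : {set 'I_q_n};
  q_rej : {set 'I_q_n};
  q_disj : [disjoint q_acc & q_rej];
  q_unitary : forall a, unitary (q_V a);
  q_end : forall q p : 'I_q_n, q \notin q_acc :|: q_rej ->
            p \notin q_acc :|: q_rej -> q_V TRight q p = 0
}.

Definition qprob (T : qfst) (v w : seq bool) : R :=
  run_acc sqmod (q_V T) (@q_f T) (q_acc T) (q_acc T :|: q_rej T) w
          (init (q_q0 T)) (tape v).
End QFST.

Section PFST.
Variable R : realType.

Definition stochastic n (A : 'M[R]_n) : Prop :=
  (forall q p, 0 <= A q p) /\ (forall q, \sum_(p < n) A q p = 1).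

Record pfst : Type := PFST {
  p_n : nat;
  p_V : tsym -> 'M[R]_p_n;
  p_f : tsym -> 'I_p_n -> seq bool;
  p_q0 : 'I_p_n;
  p_acc : {set 'I_p_n};
  p_rej : {set 'I_p_n};
  p_disj : [disjoint p_acc & p_rej];
  p_stoch : forall a, stochastic (p_V a);
  p_end : forall q p : 'I_p_n, p \notin p_acc :|: p_rej -> p_V TRight q p = 0
}.

Definition pprob (T : pfst) (v w : seq bool) : R :=
  run_acc id (p_V T) (@p_f T) (p_acc T) (p_acc T :|: p_rej T) w
          (init (p_q0 T)) (tape v).

Definition is_dfst (T : pfst) : Prop :=
  forall a q p, p_V T a q p = 0 \/ p_V T a q p = 1.

Definition dfst_computes (T : pfst) (Rel : seq bool -> seq bool -> Prop) : Prop :=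
  forall v w, (Rel v w -> pprob T v w = 1) /\ (~ Rel v w -> pprob T v w = 0).
End PFST.

Definition qfst_computes_isolated (R : realType) (T : qfst R)
  (Rel : seq bool -> seq bool -> Prop) : Prop :=
  exists alpha eps : R, [/\ 0 < alpha, alpha < 1, 0 < eps &
    forall v w, (Rel v w -> alpha + eps <= qprob T v w) /\
                (~ Rel v w -> qprob T v w <= alpha - eps)].

Definition R5 (v o : seq bool) : Prop :=
  exists (w : seq bool) (x : bool), v = rcons w x /\ o = [:: x].

(* Only the part of a configuration with output of length at most one matters
   for R5, and its squared norm N is a finite-dimensional seminorm that never
   increases while reading.  Pick a prefix s after which N can drop by at most
   del, let phi be the configuration after s1 and A the step reading 0.  The
   iterates A^j phi are bounded, so two of them, A^k phi and A^l phi, are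
   close; as the defect N x - N (A x) is a nonnegative quadratic form whose
   sums along the orbit of phi are small, phi itself is close to A^(l-k) phi.
   Then the probabilities of accepting with output 1 on s1 (in R5) and on
   s1 0^(l-k) (not in R5) differ by less than the isolation gap: the longer
   input can only add probability accepted before the end marker, and the
   last step is continuous for N.  A dfst only has to remember the last
   letter. *)

From HB Require Import structures.
From mathcomp Require Import all_boot all_order all_algebra.
From mathcomp Require Import complex reals.
From mathcomp Require Import boolp functions.
From mathcomp Require classical_sets.
From mathcomp Require Import ring lra.
Set Implicit Arguments. Unset Strict Implicit. Unset Printing Implicit Defensive.
Import Order.TTheory GRing.Theory Num.Theory.
Local Open Scope ring_scope.

Lemma big_option (V : Type) (idx : V) (op : Monoid.com_law idx) (T : finType)
    (F : option T -> V) :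
  \big[op/idx]_o F o = op (F None) (\big[op/idx]_t F (Some t)).
Proof.
transitivity (\big[op/idx]_(o <- None :: map Some (index_enum T)) F o); last first.
  by rewrite big_cons big_map.
apply: perm_big; apply: uniq_perm; first exact: index_enum_uniq.
  by rewrite /= map_inj_uniq ?index_enum_uniq // andbT; apply/mapP => -[].
by move=> [t|]; rewrite mem_index_enum //= in_cons /= map_f ?mem_index_enum.
Qed.

Section SquaredModulus.
Variable R : realType.
Local Notation C := R[i].
Local Open Scope complex_scope.

Lemma sqmod_ge0 (z : C) : 0 <= sqmod z.
Proof. by rewrite addr_ge0 ?sqr_ge0. Qed.

Lemma sqmod0 : sqmod (0 : C) = 0.
Proof. by rewrite /sqmod /= expr0n addr0. Qed.

Lemma sqmod1 : sqmod (1 : C) = 1.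
Proof. by rewrite /sqmod /= expr0n addr0 expr1n. Qed.

Lemma sqmodE (z : C) : (sqmod z)%:C = z * z^*.
Proof.
case: z => a b; rewrite /sqmod /=; simpc.
by apply/eqP; rewrite eq_complex /=; apply/andP; split; apply/eqP; ring.
Qed.

Lemma sqmod_parallelogram (a b : C) :
  sqmod (a - b) + sqmod (a + b) = 2 * sqmod a + 2 * sqmod b.
Proof. by case: a => a1 a2; case: b => b1 b2; rewrite /sqmod /=; ring. Qed.

(* Young's inequality [2 Re (a conj b) <= t |a|^2 + |b|^2 / t]. *)
Lemma sqmodD_le (a b : C) (t : R) : 0 < t ->
  sqmod (a + b) <= (1 + t) * sqmod a + (1 + t^-1) * sqmod b.
Proof.
move=> t_gt0; case: a => a1 a2; case: b => b1 b2; rewrite /sqmod /=.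
have square_ge0 : 0 <= t^-1 * ((t * a1 - b1) ^+ 2 + (t * a2 - b2) ^+ 2).
  by rewrite mulr_ge0 ?addr_ge0 ?sqr_ge0 // invr_ge0 ltW.
have expand : t^-1 * ((t * a1 - b1) ^+ 2 + (t * a2 - b2) ^+ 2) =
    t * (a1 ^+ 2 + a2 ^+ 2) - 2 * (a1 * b1 + a2 * b2) + t^-1 * (b1 ^+ 2 + b2 ^+ 2).
  by field; rewrite gt_eqF.
rewrite expand in square_ge0; lra.
Qed.

Lemma unitary_sum_sqmod n (V : 'M[C]_n) (c : 'I_n -> C) : unitary V ->
  \sum_p sqmod (\sum_q c q * V q p) = \sum_q sqmod (c q).
Proof.
move=> unitV; apply: (@complexI R); rewrite !rmorph_sum /=.
have gram q r : \sum_p c q * V q p * (c r * V r p)^* = c q * (c r)^* * (q == r)%:R.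
  have -> : (q == r)%:R = (V *m conjT V) q r by rewrite unitV mxE.
  rewrite mxE mulr_sumr.
  by apply: eq_bigr => p _; rewrite /conjT !mxE rmorphM /=; ring.
transitivity (\sum_p \sum_q \sum_r c q * V q p * (c r * V r p)^*).
  apply: eq_bigr => p _; rewrite sqmodE rmorph_sum mulr_suml.
  by apply: eq_bigr => q _; rewrite mulr_sumr.
rewrite exchange_big /=; apply: eq_bigr => q _.
rewrite exchange_big /= (bigD1 q) //= gram eqxx mulr1 sqmodE big1 ?addr0 //.
by move=> r rq; rewrite gram eq_sym (negbTE rq) mulr0.
Qed.
End SquaredModulus.

Section BoundedSequences.
Variable R : realType.

Lemma almost_minimizer (T : Type) (g : T -> R) (x0 : T) (del : R) :
  0 < del -> (forall x, 0 <= g x) -> exists x, forall y, g x - del <= g y.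
Proof.
move=> del_gt0 g_ge0; pose E (r : R) := exists x, g x = r.
have inf_E : classical_sets.has_inf E.
  by split; [exists (g x0), x0 | exists 0 => _ [x <-]].
have [_ [x <-] gx_lt] := inf_adherent del_gt0 inf_E.
exists x => y; have : inf E <= g y by apply: (ge_inf inf_E.2); exists y.
lra.
Qed.

Definition cell (M : nat) (c : R) : nat := Num.truncn ((c + 1) * M%:R).

Lemma cell_lt M c : `|c| <= 1 -> (cell M c < (M.*2).+1)%N.
Proof.
rewrite ler_norml => /andP[c_ge c_le].
rewrite /cell ltnS truncn_le_nat -addn1 natrD -muln2 natrM.
have := ler0n R M; nra.
Qed.

Lemma same_cell_close M c c' : `|c| <= 1 -> `|c'| <= 1 ->
  cell M c = cell M c' -> `|c - c'| * M%:R < 1.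
Proof.
rewrite !ler_norml => /andP[c_ge _] /andP[c'_ge _] same.
have /truncn_itv : 0 <= (c + 1) * M%:R by rewrite mulr_ge0 //; lra.
have /truncn_itv : 0 <= (c' + 1) * M%:R by rewrite mulr_ge0 //; lra.
rewrite -/(cell M c) -/(cell M c') same => /andP[lo' hi'] /andP[lo hi].
rewrite -normr_nat -normrM ltr_norml; lra.
Qed.

Lemma bounded_seq_same_cells (I : finType) (c : nat -> I -> R) (M : nat) :
  (forall k i, `|c k i| <= 1) ->
  exists k l, (k < l)%N /\ forall i, cell M (c k i) = cell M (c l i).
Proof.
move=> c_bound.
pose key (k : 'I_#|{ffun I -> 'I_(M.*2).+1}|.+1) : {ffun I -> 'I_(M.*2).+1} :=
  [ffun i => Ordinal (cell_lt M (c_bound k i))].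
have /injectivePn[k [l kl key_kl]] : ~~ injectiveb key.
  by apply/injectiveP => /leq_card; rewrite card_ord ltnn.
have same i : cell M (c k i) = cell M (c l i).
  by move/ffunP/(_ i): key_kl; rewrite !ffunE => -[].
case: (ltngtP k l) => [lt_kl|lt_lk|/val_inj eq_kl]; last by rewrite eq_kl eqxx in kl.
- by exists k, l.
- by exists l, k; split => // i; rewrite same.
Qed.

Lemma bounded_seq_close_pair (I : finType) (c : nat -> I -> R) (eta : R) :
  0 < eta -> (forall k i, `|c k i| <= 1) ->
  exists k l, (k < l)%N /\ \sum_i (c k i - c l i) ^+ 2 <= eta.
Proof.
move=> eta_gt0 c_bound; set M := (Num.truncn (#|I|%:R / eta)).+1.
have [k [l [lt_kl same]]] := bounded_seq_same_cells M c_bound.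
exists k, l; split => //.
have M_ge1 : 1 <= M%:R :> R by rewrite ler1n.
have M_big : #|I|%:R < eta * M%:R.
  by rewrite mulrC -ltr_pdivrMr // truncnS_gt.
have term_le i : (c k i - c l i) ^+ 2 * M%:R <= 1.
  have := same_cell_close (c_bound k i) (c_bound l i) (same i).
  have := normr_ge0 (c k i - c l i); rewrite -real_normK ?num_real //; nra.
have sum_le : (\sum_i (c k i - c l i) ^+ 2) * M%:R <= #|I|%:R.
  by rewrite mulr_suml -sum1_card natr_sum ler_sum.
rewrite -(ler_pM2r (lt_le_trans ltr01 M_ge1)); lra.
Qed.
End BoundedSequences.

Section ContractionDefect.
Variables (R : realType) (X : zmodType) (N : X -> R) (A : X -> X).
Hypothesis N_parallelogram : forall x y, N (x - y) + N (x + y) = 2 * N x + 2 * N y.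
Hypothesis A_sub : {morph A : x y / x - y}.
Hypothesis N_contraction : forall x, N (A x) <= N x.

Definition defect x := N x - N (A x).

Lemma defect_ge0 x : 0 <= defect x.
Proof. by rewrite subr_ge0. Qed.

Lemma defectB_le x y : defect (x - y) <= 2 * defect x + 2 * defect y.
Proof.
have A_add : A (x + y) = A x + A y by apply/eqP; rewrite -subr_eq -A_sub addrK.
have := N_parallelogram x y; have := N_parallelogram (A x) (A y).
have := defect_ge0 (x + y); rewrite /defect A_sub A_add; lra.
Qed.

Lemma iterB k x y : iter k A (x - y) = iter k A x - iter k A y.
Proof. by elim: k => //= k ->; rewrite A_sub. Qed.

Lemma iter_contraction k x : N (iter k A x) <= N x.
Proof. by elim: k => //= k IHk; apply: le_trans (N_contraction _) IHk. Qed.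

Lemma sum_defect_iter k x : N x - N (iter k A x) = \sum_(j < k) defect (iter j A x).
Proof.
elim: k => [|k IHk]; first by rewrite big_ord0 subrr.
by rewrite big_ord_recr -IHk /defect /=; ring.
Qed.

(* The defect along the orbit of [x - A^(l-k) x] is at most twice the defects
   along the orbits of [x] and [A^(l-k) x], and over [k] steps these sum to at
   most [del] each. *)
Lemma iter_return k l x (eta del : R) : (k < l)%N ->
  N (iter k A x - iter l A x) <= eta ->
  (forall j, N x - del <= N (iter j A x)) ->
  N (x - iter (l - k) A x) <= eta + 4 * del.
Proof.
move=> lt_kl close orbit; set m := (l - k)%N.
have iter_l : iter k A (iter m A x) = iter l A x by rewrite -iterD subnKC // ltnW.
have key : N (x - iter m A x) - N (iter k A (x - iter m A x)) <=
    2 * (N x - N (iter k A x)) + 2 * (N (iter m A x) - N (iter k A (iter m A x))).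
  rewrite !sum_defect_iter !mulr_sumr -big_split ler_sum // => j _.
  by rewrite iterB defectB_le.
rewrite iterB iter_l in key.
have := orbit k; have := orbit l; have := iter_contraction m x; lra.
Qed.
End ContractionDefect.

Section AdditiveEvolution.
Variables (K : pzRingType) (n : nat).

Lemma evolveB (V : 'M[K]_n) (f : 'I_n -> seq bool) : {morph evolve V f : x y / x - y}.
Proof.
move=> x y; apply/funext => p; apply/funext => w.
rewrite !fctE /= /evolve -sumrB; apply: eq_bigr => q _.
by case: ifP; rewrite ?subr0 // !fctE /= mulrBl.
Qed.

Lemma projectB (halt : {set 'I_n}) : {morph @project K n halt : x y / x - y}.
Proof.
move=> x y; apply/funext => p; apply/funext => w.
by rewrite !fctE /= /project; case: ifP; rewrite ?subr0.
Qed.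

Lemma evolve0 (V : 'M[K]_n) (f : 'I_n -> seq bool) : evolve V f 0 = 0.
Proof. by have := evolveB V f 0 0; rewrite !subrr. Qed.

Lemma project0 (halt : {set 'I_n}) : project halt (0 : 'I_n -> seq bool -> K) = 0.
Proof. by have := projectB halt 0 0; rewrite !subrr. Qed.
End AdditiveEvolution.

Section ShortNorm.
Variables (R : realType) (n : nat).
Local Notation C := R[i].
Local Notation config := ('I_n -> seq bool -> C).
Implicit Types (x y psi : config) (V : 'M[C]_n) (f : 'I_n -> seq bool).

Definition short (o : option bool) : seq bool := if o is Some b then [:: b] else [::].

(* Reading a symbol
   only appends to the output, so it cannot move weight from longer outputs
   to these, and [short_norm] is a finite-dimensional seminorm that is still
   contracted by every step of a qfst. *)
Definition short_norm x : R := \sum_q \sum_o sqmod (x q (short o)).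

Lemma short_norm_ge0 x : 0 <= short_norm x.
Proof. by do 2![apply: sumr_ge0 => ? _]; apply: sqmod_ge0. Qed.

Lemma short_norm_init q0 : short_norm (init q0) = 1.
Proof.
have others : \sum_(q | q != q0) \sum_o sqmod (init q0 q (short o) : C) = 0.
  by apply: big1 => q /negbTE nq; apply: big1 => o _; rewrite /init nq sqmod0.
rewrite /short_norm (bigD1 q0) //= others addr0 big_option big_bool /init eqxx /=.
by rewrite sqmod1 !sqmod0 !addr0.
Qed.

Lemma short_norm_parallelogram x y :
  short_norm (x - y) + short_norm (x + y) = 2 * short_norm x + 2 * short_norm y.
Proof.
rewrite /short_norm -big_split !mulr_sumr -big_split /=; apply: eq_bigr => q _.
rewrite -big_split !mulr_sumr -big_split /=; apply: eq_bigr => o _.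
by rewrite !fctE /= sqmod_parallelogram.
Qed.

Definition shifted f psi q (w : seq bool) : C :=
  if (size (f q) <= size w)%N && (drop (size w - size (f q)) w == f q)
  then psi q (take (size w - size (f q)) w) else 0.

Lemma evolveE V f psi p w : evolve V f psi p w = \sum_q shifted f psi q w * V q p.
Proof. by apply: eq_bigr => q _; rewrite /shifted; case: ifP; rewrite ?mul0r. Qed.

Lemma sum_sqmod_shifted_le f psi q :
  \sum_o sqmod (shifted f psi q (short o)) <= \sum_o sqmod (psi q (short o)).
Proof.
rewrite !big_option !big_bool /shifted /=.
have := sqmod_ge0 (psi q [::]); have := sqmod_ge0 (psi q [:: true]).
have := sqmod_ge0 (psi q [:: false]).
by case: (f q) => [|b [|? ?]] /=; rewrite ?sqmod0 //; [case: b|]; rewrite /= ?sqmod0; lra.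
Qed.

Lemma short_norm_evolve V f psi : unitary V ->
  short_norm (evolve V f psi) <= short_norm psi.
Proof.
move=> unitV; rewrite /short_norm exchange_big /=.
under eq_bigr do under eq_bigr do rewrite evolveE.
under eq_bigr do rewrite (unitary_sum_sqmod (fun q => shifted f psi q _) unitV).
by rewrite exchange_big /= ler_sum // => q _; apply: sum_sqmod_shifted_le.
Qed.

Lemma short_norm_project (halt : {set 'I_n}) x :
  short_norm (project halt x) <= short_norm x.
Proof.
do 2![apply: ler_sum => ? _]; rewrite /project.
by case: ifP => _; rewrite ?sqmod0 ?sqmod_ge0.
Qed.

Lemma acc_weight_le_short_norm (acc : {set 'I_n}) psi o :
  acc_weight (@sqmod R) acc psi (short o) <= short_norm psi.
Proof.
rewrite /acc_weight big_mkcond /=; apply: ler_sum => q _; rewrite (bigD1 o) //=.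
have rest_ge0 : 0 <= \sum_(o' | o' != o) sqmod (psi q (short o')).
  by apply: sumr_ge0 => o' _; apply: sqmod_ge0.
by case: ifP => _; rewrite ?lerDl // addr_ge0 ?sqmod_ge0.
Qed.

Lemma acc_weightD_le (acc : {set 'I_n}) x y w (t : R) : 0 < t ->
  acc_weight (@sqmod R) acc (x + y) w <=
  (1 + t) * acc_weight (@sqmod R) acc x w + (1 + t^-1) * acc_weight (@sqmod R) acc y w.
Proof.
move=> t_gt0; rewrite /acc_weight !mulr_sumr -big_split ler_sum // => q _.
by rewrite !fctE /= sqmodD_le.
Qed.

Definition short_coord x (i : 'I_n * option bool * bool) : R :=
  let: (q, o, re) := i in
  if re then complex.Re (x q (short o)) else complex.Im (x q (short o)).

Lemma short_norm_coord x : short_norm x = \sum_i short_coord x i ^+ 2.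
Proof.
rewrite /short_norm (eq_bigr (fun q => \sum_o \sum_re short_coord x (q, o, re) ^+ 2)).
  by rewrite !pair_bigA; apply: eq_bigr => -[[]].
by move=> q _; apply: eq_bigr => o _; rewrite big_bool.
Qed.

Lemma short_coordB x y i : short_coord (x - y) i = short_coord x i - short_coord y i.
Proof.
by case: i => [[q o] []]; rewrite /= !fctE /=; case: (x q _) => ? ?; case: (y q _).
Qed.

Lemma short_coord_le1 x i : short_norm x <= 1 -> `|short_coord x i| <= 1.
Proof.
move=> x_le1; rewrite -(expr_le1 (_ : 0 < 2)%N) // real_normK ?num_real //.
apply: le_trans x_le1; rewrite short_norm_coord (bigD1 i) //= lerDl.
by apply: sumr_ge0 => j _; apply: sqr_ge0.
Qed.

Lemma short_norm_close_pair (g : nat -> config) (eta : R) : 0 < eta ->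
  (forall k, short_norm (g k) <= 1) ->
  exists k l, (k < l)%N /\ short_norm (g k - g l) <= eta.
Proof.
move=> eta_gt0 g_le1.
have [k [l [lt_kl close]]] := @bounded_seq_close_pair R _ (fun k => short_coord (g k))
  eta eta_gt0 (fun k i => short_coord_le1 i (g_le1 k)).
exists k, l; split => //; rewrite short_norm_coord.
by under eq_bigr do rewrite short_coordB.
Qed.
End ShortNorm.

Lemma run_acc_cat (K R' : pzRingType) (wt : K -> R') n (V : tsym -> 'M[K]_n)
    (f : tsym -> 'I_n -> seq bool) (acc halt : {set 'I_n}) x psi s1 s2 :
  run_acc wt V f acc halt x psi (s1 ++ s2) =
  run_acc wt V f acc halt x psi s1 +
  run_acc wt V f acc halt x
    (foldl (fun psi a => project halt (evolve (V a) (f a) psi)) psi s1) s2.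
Proof. by elim: s1 psi => [|a s1 IH] psi /=; rewrite ?add0r // IH addrA. Qed.

Lemma run_acc_ge0 (K : pzRingType) (R' : numDomainType) (wt : K -> R') n
    (V : tsym -> 'M[K]_n) (f : tsym -> 'I_n -> seq bool) (acc halt : {set 'I_n}) x psi s :
  (forall z, 0 <= wt z) -> 0 <= run_acc wt V f acc halt x psi s.
Proof.
move=> wt_ge0; elim: s psi => [|a s IH] psi //=.
by rewrite addr_ge0 // sumr_ge0.
Qed.

Section QuantumTransducer.
Variables (R : realType) (T : qfst R).
Local Notation n := (q_n T).
Local Notation config := ('I_n -> seq bool -> R[i]).

Definition halting := q_acc T :|: q_rej T.

Definition qstep (a : tsym) (psi : config) : config :=
  project halting (evolve (q_V T a) (@q_f _ T a) psi).

Definition qconf (v : seq bool) : config :=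
  foldl (fun psi a => qstep a psi) (init (q_q0 T)) (TLeft :: map TLetter v).

Definition prefix_acc (v w : seq bool) : R :=
  run_acc (@sqmod R) (q_V T) (@q_f _ T) (q_acc T) halting w (init (q_q0 T))
    (TLeft :: map TLetter v).

Definition qfinish (psi : config) : config := evolve (q_V T TRight) (@q_f _ T TRight) psi.

Definition final_acc (w : seq bool) (psi : config) : R :=
  acc_weight (@sqmod R) (q_acc T) (qfinish psi) w.

Lemma qprobE v w : qprob T v w = prefix_acc v w + final_acc w (qconf v).
Proof. by rewrite /qprob /tape -cats1 -cat_cons run_acc_cat /= addr0. Qed.

Lemma prefix_acc_cat u s w : prefix_acc u w <= prefix_acc (u ++ s) w.
Proof.
rewrite /prefix_acc map_cat -cat_cons run_acc_cat lerDl.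
by apply: run_acc_ge0 => z; apply: sqmod_ge0.
Qed.

Lemma qconf_cat u s :
  qconf (u ++ s) = foldl (fun psi a => qstep a psi) (qconf u) (map TLetter s).
Proof. by rewrite /qconf map_cat -cat_cons foldl_cat. Qed.

Lemma qconf_nseq u m b : qconf (u ++ nseq m b) = iter m (qstep (TLetter b)) (qconf u).
Proof.
rewrite qconf_cat map_nseq; elim: m (qconf u) => // m IHm psi.
by rewrite [LHS]/= IHm -iterSr.
Qed.

Lemma qstepB a : {morph qstep a : x y / x - y}.
Proof. by move=> x y; rewrite /qstep evolveB projectB. Qed.

Lemma short_norm_qstep a psi : short_norm (qstep a psi) <= short_norm psi.
Proof. exact: le_trans (short_norm_project _ _) (short_norm_evolve _ _ (q_unitary T a)). Qed.

Lemma short_norm_foldl_qstep psi s :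
  short_norm (foldl (fun psi a => qstep a psi) psi s) <= short_norm psi.
Proof.
elim: s psi => //= a s IH psi.
exact: le_trans (IH _) (short_norm_qstep _ _).
Qed.

Lemma short_norm_qconf_cat u s : short_norm (qconf (u ++ s)) <= short_norm (qconf u).
Proof. by rewrite qconf_cat short_norm_foldl_qstep. Qed.

Lemma short_norm_qconf v : short_norm (qconf v) <= 1.
Proof. by rewrite -(short_norm_init R (q_q0 T)) short_norm_foldl_qstep. Qed.

Lemma final_acc_le o x y (t : R) : 0 < t -> short_norm y <= 1 ->
  final_acc (short o) x <= final_acc (short o) y + t + (1 + t^-1) * short_norm (x - y).
Proof.
move=> t_gt0 y_le1.
have final_le z : final_acc (short o) z <= short_norm z.
  exact: le_trans (acc_weight_le_short_norm _ _ _) (short_norm_evolve _ _ (q_unitary T _)).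
have split_x : qfinish y + qfinish (x - y) = qfinish x by rewrite /qfinish evolveB addrC subrK.
have := acc_weightD_le (q_acc T) (qfinish y) (qfinish (x - y)) (short o) t_gt0.
rewrite split_x -/(final_acc _ x) -/(final_acc _ y) -/(final_acc _ (x - y)).
have K_gt0 : 0 < 1 + t^-1 by rewrite addr_gt0 // invr_gt0.
have := ler_wpM2l (ltW t_gt0) (le_trans (final_le y) y_le1).
have := ler_wpM2l (ltW K_gt0) (final_le (x - y)).
have : 0 <= final_acc (short o) y by apply: sumr_ge0 => q _; apply: sqmod_ge0.
lra.
Qed.

Lemma qconf_recurrent (u : seq bool) (b : bool) (eta : R) : 0 < eta ->
  exists s m, (0 < m)%N /\
    short_norm (qconf (s ++ u) - qconf (s ++ u ++ nseq m b)) <= eta.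
Proof.
move=> eta_gt0; set del := eta / 5.
have del_gt0 : 0 < del by rewrite divr_gt0.
have [s s_min] := almost_minimizer (g := fun v => short_norm (qconf v)) [::] del_gt0
  (fun v => short_norm_ge0 _).
set phi := qconf (s ++ u).
have orbit j : iter j (qstep (TLetter b)) phi = qconf (s ++ u ++ nseq j b).
  by rewrite catA qconf_nseq.
have orbit_norm j : short_norm phi - del <= short_norm (iter j (qstep (TLetter b)) phi).
  have := s_min (s ++ u ++ nseq j b); have := short_norm_qconf_cat s u.
  by rewrite orbit; lra.
have [k [l [lt_kl /= close]]] := short_norm_close_pair del_gt0
  (fun j => le_trans (iter_contraction (short_norm_qstep (TLetter b)) j phi) (short_norm_qconf _)).
exists s, (l - k)%N; split; first by rewrite subn_gt0.
rewrite -orbit (_ : eta = del + 4 * del); last by rewrite /del; field.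
exact (iter_return (@short_norm_parallelogram R n) (qstepB (TLetter b))
  (short_norm_qstep (TLetter b)) lt_kl close orbit_norm).
Qed.

End QuantumTransducer.

Lemma no_isolated_qfst_R5 (R : realType) (T : qfst R) : ~ qfst_computes_isolated T R5.
Proof.
move=> [alpha [eps [_ _ eps_gt0 computes]]].
set t := eps / 2; set K := 1 + t^-1.
have t_gt0 : 0 < t by rewrite divr_gt0.
have K_gt0 : 0 < K by rewrite addr_gt0 // invr_gt0.
have [s [m [m_gt0 close]]] := qconf_recurrent T [:: true] false (divr_gt0 t_gt0 K_gt0).
have in_R5 : R5 (s ++ [:: true]) [:: true] by exists s, true; rewrite cats1.
have notin_R5 : ~ R5 (s ++ [:: true] ++ nseq m false) [:: true].
  have last_nseq j : last false (nseq j false) = false by elim: j.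
  move=> [w [x [/(congr1 (last true))]]]; rewrite last_rcons !last_cat.
  by case: m m_gt0 {close} => // m _ /=; rewrite last_nseq => <-.
have := (computes _ _).1 in_R5; have := (computes _ _).2 notin_R5; rewrite !qprobE.
have := prefix_acc_cat T (s ++ [:: true]) (nseq m false) [:: true]; rewrite -catA.
have := final_acc_le (Some true) (qconf (T:=T) (s ++ [:: true])) t_gt0
  (short_norm_qconf T (s ++ [:: true] ++ nseq m false)).
have K_t : K * (t / K) = t by rewrite mulrC divfK ?gt_eqF.
have := ler_wpM2l (ltW K_gt0) close; rewrite K_t -/K /t; lra.
Qed.

Section FunctionalTransducer.
Variables (R : realType) (n : nat) (delta : tsym -> 'I_n -> 'I_n).
Variables (f : tsym -> 'I_n -> seq bool) (acc halt : {set 'I_n}).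

Definition fun_mx (a : tsym) : 'M[R]_n := \matrix_(q, p) (delta a q == p)%:R.

Lemma fun_mx_stochastic a : stochastic (fun_mx a).
Proof.
split=> [q p|q]; first by rewrite mxE ler0n.
rewrite (bigD1 (delta a q)) //= mxE eqxx big1 ?addr0 // => p p_neq.
by rewrite mxE eq_sym (negbTE p_neq).
Qed.

Lemma fun_mx01 a q p : fun_mx a q p = 0 \/ fun_mx a q p = 1.
Proof. by rewrite mxE; case: eqP; [right | left]. Qed.

Definition point (q : 'I_n) (w : seq bool) : 'I_n -> seq bool -> R :=
  fun p y => ((p == q) && (y == w))%:R.

Lemma init_point q : init q = point q [::].
Proof. by apply/funext => p; apply/funext => y; rewrite /init /point; case: (_ && _). Qed.

Lemma suffix_splitE (y w s : seq bool) :
  [&& (size s <= size y)%N, drop (size y - size s) y == s & take (size y - size s) y == w]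
  = (y == w ++ s).
Proof.
apply/idP/eqP => [/and3P[_ /eqP drop_y /eqP take_y]|->].
  by rewrite -(cat_take_drop (size y - size s) y) drop_y take_y.
by rewrite size_cat addnK leq_addl drop_size_cat // take_size_cat // !eqxx.
Qed.

Lemma evolve_point a q w :
  evolve (fun_mx a) (f a) (point q w) = point (delta a q) (w ++ f a q).
Proof.
apply/funext => p; apply/funext => y.
rewrite /evolve (bigD1 q) //= big1 ?addr0 => [|r /negbTE r_neq]; last first.
  by rewrite /point r_neq; case: ifP; rewrite ?mul0r.
rewrite /point mxE eqxx /= -suffix_splitE [p == _]eq_sym.
by case: (_ <= _)%N; case: (drop _ _ == _); case: (take _ _ == _); case: (_ == p);
  rewrite /= ?mul1r ?mul0r.
Qed.

Lemma project_point q w : project halt (point q w) = if q \in halt then 0 else point q w.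
Proof.
apply/funext => p; apply/funext => y; rewrite /project.
case: (p =P q) => [-> | /eqP p_q]; first by case: ifP.
by case: (q \in halt); case: (p \in halt); rewrite /point //= (negbTE p_q).
Qed.

Lemma acc_weight_point q w y : acc_weight id acc (point q w) y = ((q \in acc) && (y == w))%:R.
Proof.
rewrite /acc_weight /point.
have [/andP[q_acc /eqP ->]|q_out] := boolP ((q \in acc) && (y == w)).
  by rewrite (bigD1 q) //= !eqxx big1 ?addr0 // => p /andP[_ /negbTE ->].
apply: big1 => p p_acc; case: eqP => //= p_q; case: eqP => //= y_w.
by rewrite -p_q p_acc y_w eqxx in q_out.
Qed.

Lemma run_acc0 y s : run_acc id fun_mx f acc halt y 0 s = 0.
Proof.
by elim: s => //= a s IH; rewrite evolve0 project0 IH addr0; apply: big1.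
Qed.

Lemma run_acc_point a s q w y :
  run_acc id fun_mx f acc halt y (point q w) (a :: s) =
  ((delta a q \in acc) && (y == w ++ f a q))%:R +
  (if delta a q \in halt then 0
   else run_acc id fun_mx f acc halt y (point (delta a q) (w ++ f a q)) s).
Proof.
rewrite /= evolve_point acc_weight_point project_point.
by case: ifP; rewrite ?run_acc0.
Qed.
End FunctionalTransducer.

Section R5Transducer.
Variable R : realType.

(* [ord0] is the initial state and [seen b] remembers that the last letter read
   was [b]; on the right end marker [seen b] accepts with output [b] and [ord0]
   (empty input) rejects. *)
Definition seen (b : bool) : 'I_5 := if b then @Ordinal 5 2 isT else @Ordinal 5 1 isT.
Definition r5_accept : 'I_5 := @Ordinal 5 3 isT.
Definition r5_reject : 'I_5 := @Ordinal 5 4 isT.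

Definition r5_delta (a : tsym) (q : 'I_5) : 'I_5 :=
  match a with
  | TLeft => ord0
  | TLetter b => seen b
  | TRight => if q == ord0 then r5_reject else r5_accept
  end.

Definition r5_out (a : tsym) (q : 'I_5) : seq bool :=
  if a is TRight then [:: q == seen true] else [::].

Lemma r5_disjoint : [disjoint [set r5_accept] & [set r5_reject]].
Proof. by rewrite disjoints1 in_set1. Qed.

Lemma r5_end q p : p \notin [set r5_accept] :|: [set r5_reject] ->
  fun_mx R r5_delta TRight q p = 0.
Proof.
move=> p_running; rewrite mxE; case: eqP => // delta_p.
by move: p_running; rewrite -delta_p !inE /=; case: ifP.
Qed.

Definition r5_dfst : pfst R :=
  PFST r5_out ord0 r5_disjoint (fun_mx_stochastic R r5_delta) r5_end.

Lemma r5_dfst_is_dfst : is_dfst r5_dfst.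
Proof. exact: fun_mx01. Qed.

Local Notation run y psi s :=
  (run_acc id (fun_mx R r5_delta) r5_out [set r5_accept]
     ([set r5_accept] :|: [set r5_reject]) y psi s).

Lemma r5_pprobE v y :
  pprob r5_dfst v y = run y (point R ord0 [::]) (TLeft :: map TLetter v ++ [:: TRight]).
Proof. by rewrite /pprob /tape -cats1 init_point. Qed.

Lemma r5_run_rcons u b q y :
  run y (point R q [::]) (map TLetter (rcons u b) ++ [:: TRight]) = (y == [:: b])%:R.
Proof.
elim: u q => [|b' u IH] q.
  rewrite [map _ _ ++ _]/= !run_acc_point !inE.
  by case: b; case: (y == _); rewrite /= ?addr0 ?add0r.
rewrite rcons_cons map_cons cat_cons run_acc_point !inE.
by case: b' => /=; rewrite IH add0r.
Qed.

Lemma r5_pprob_nil y : pprob r5_dfst [::] y = 0.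
Proof. by rewrite r5_pprobE !run_acc_point !inE /= !add0r. Qed.

Lemma r5_pprob_rcons u b y : pprob r5_dfst (rcons u b) y = (y == [:: b])%:R.
Proof. by rewrite r5_pprobE run_acc_point !inE /= add0r r5_run_rcons. Qed.

Lemma r5_dfst_computes : dfst_computes r5_dfst R5.
Proof.
move=> v w; case/lastP: v => [|u b].
  rewrite r5_pprob_nil; split => // -[w' [x [/(congr1 size)]]].
  by rewrite size_rcons.
rewrite r5_pprob_rcons; split.
  by move=> [w' [x [/rcons_inj[_ <-] ->]]]; rewrite eqxx.
by move=> not_R5; case: eqP => // w_b; case: not_R5; exists u, b.
Qed.
End R5Transducer.

Theorem theorem10 (R : realType) :
  (~ exists T : qfst R, qfst_computes_isolated T R5) /\
  (exists T : pfst R, is_dfst T /\ dfst_computes T R5).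
Proof.
split; first by move=> [T]; apply: no_isolated_qfst_R5.
by exists (r5_dfst R); split; [apply: r5_dfst_is_dfst | apply: r5_dfst_computes].
Qed.
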